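(* Let $g_1,\dots,g_N\in\mathbb{C}^K$ be nonzero, $w_1,\dots,w_N\ge0$, and let $\mathrm{WFP}$ and $\mathrm{WFC}$ be as defined in the context. Let $\mathcal{N}$ be partitioned into disjoint sets $\mathcal{S}_1,\dots,\mathcal{S}_L$ and fix integers $0\le r_i\le|\mathcal{S}_i|$, not all zero. Let $\mathcal{R}^\ast$ be the output of the JGS algorithm run with cost $\mathcal{C}=\mathrm{WFC}$ and cardinality requirements $|\mathcal{R}\cap\mathcal{S}_i|=r_i$, and set $\mathcal{T}^\ast=\mathcal{N}\setminus\mathcal{R}^\ast$. Let $\mathcal{T}_{OPT}$ minimize $\mathrm{WFP}(\mathcal{T})$ over all $\mathcal{T}\subseteq\mathcal{N}$ with $|\mathcal{T}\cap\mathcal{S}_i|=|\mathcal{S}_i|-r_i$ for all $i$, and suppose $\mathrm{WFP}(\mathcal{T}_{OPT})>0$. Then $$\mathrm{WFP}(\mathcal{T}^\ast)\le\frac12\Big(1+\frac{\mathrm{WFP}(\mathcal{N})}{\mathrm{WFP}(\mathcal{T}_{OPT})}\Big)\mathrm{WFP}(\mathcal{T}_{OPT}).$$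
   Context: $\mathrm{WFP}(\mathcal{S})=\sum_{i,j\in\mathcal{S}}w_iw_j\frac{|\langle g_i,g_j\rangle|^2}{\|g_i\|_2^2\|g_j\|_2^2}$ (weighted frame potential) and $\mathrm{WFC}(\mathcal{T})=\mathrm{WFP}(\mathcal{N})-\mathrm{WFP}(\mathcal{N}\setminus\mathcal{T})$ (weighted frame cost). The JGS algorithm for cost $\mathcal{C}$ and requirements $r_i$: start with $\mathcal{R}=\varnothing$; for $\sum_i r_i$ iterations, form $\mathcal{R}^c=\bigcup_{i:\,|\mathcal{R}\cap\mathcal{S}_i|<r_i}(\mathcal{S}_i\setminus\mathcal{R})$, choose $t^\ast\in\arg\max_{t\in\mathcal{R}^c}\mathcal{C}(\mathcal{R}\cup\{t\})$, and set $\mathcal{R}\leftarrow\mathcal{R}\cup\{t^\ast\}$; output the final $\mathcal{R}$. (In the paper's use, $\mathcal{T}^\ast$ is the set of sensors actually kept.) *)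

From HB Require Import structures.
From mathcomp Require Import all_boot all_order all_algebra.
From mathcomp Require Import complex.
From mathcomp Require Import reals.
Set Implicit Arguments. Unset Strict Implicit. Unset Printing Implicit Defensive.
Import Order.TTheory GRing.Theory Num.Theory.
Local Open Scope ring_scope.

Section WFPdefs.
Variables (R : realType) (N K : nat).
Implicit Types (z : R[i]).

Definition csqabs z : R := (complex.Re z) ^+ 2 + (complex.Im z) ^+ 2.

Definition cinner (u v : 'cV[R[i]]_K) : R[i] :=
  \sum_(k < K) u k 0 * conjc (v k 0).

Definition csqnorm (u : 'cV[R[i]]_K) : R := \sum_(k < K) csqabs (u k 0).

Variables (g : 'I_N -> 'cV[R[i]]_K) (w : 'I_N -> R).

Definition WFP (S : {set 'I_N}) : R :=
  \sum_(i in S) \sum_(j in S)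
     w i * w j * csqabs (cinner (g i) (g j)) / (csqnorm (g i) * csqnorm (g j)).

Definition WFC (T : {set 'I_N}) : R := WFP setT - WFP (~: T).
End WFPdefs.

Section JGS.
Variables (R : realType) (N L : nat).
Variables (C : {set 'I_N} -> R) (S : 'I_L -> {set 'I_N}) (r : 'I_L -> nat).

Definition JGS_cand (Rs : {set 'I_N}) : {set 'I_N} :=
  \bigcup_(l | (#|Rs :&: S l| < r l)%N) (S l :\: Rs).

(* Rout is a possible output of the JGS algorithm (with any tie-breaking in
   the argmax): s is the sequence of chosen elements (in order), of length sum_i r_i,
   each element tk, chosen after the prefix s1 has been selected, is from the candidate set and maximizing C(R u {t}). *)
Definition JGS_output (Rout : {set 'I_N}) : Prop :=
  exists s : seq 'I_N,
    [/\ size s = (\sum_(l < L) r l)%N,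
        (forall (s1 s2 : seq 'I_N) (tk : 'I_N), s = s1 ++ tk :: s2 ->
           let Rk := [set x in s1] in
           tk \in JGS_cand Rk /\
           (forall t, t \in JGS_cand Rk -> C (Rk :|: [set t]) <= C (Rk :|: [set tk])))
      & Rout = [set x in s]].
End JGS.

From HB Require Import structures.
From mathcomp Require Import all_boot all_order all_algebra.
From mathcomp Require Import complex reals.
From mathcomp Require Import ring lra zify.

Import Order.TTheory GRing.Theory Num.Theory.
Local Open Scope ring_scope.

(* Since WFP X
   is the sum over the ordered pairs of X of nonnegative frame weights, it is
   monotone and supermodular, so WFC is monotone and submodular.  The JGS
   algorithm is the greedy algorithm for a partition-matroid constraint (at
   most r_l removed elements in block S_l), and the classical argument of
   Fisher, Nemhauser and Wolsey shows F O <= 2 F Rout - F set0 for every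
   feasible O: the output fills every quota exactly, each greedy step gains
   at least as much as any element of its block would add to the final
   output, and the elements of O are matched block by block with equally
   many greedy steps.  Applied to O = ~: Topt this gives
   WFP N - WFP Topt <= 2 (WFP N - WFP (~: Rstar)), which is the theorem. *)

(* Proof: compare the double
   sums |B| * sum_A x <= |A| * sum_B y. *)
Lemma sum_le_of_card_le (R : numDomainType) (I J : finType)
    (A : {set I}) (B : {set J}) (x : I -> R) (y : J -> R) :
  (#|A| <= #|B|)%N ->
  (forall i j, i \in A -> j \in B -> x i <= y j) ->
  (forall i, i \in A -> 0 <= x i) -> (forall j, j \in B -> 0 <= y j) ->
  \sum_(i in A) x i <= \sum_(j in B) y j.
Proof.
move=> leAB lexy x_ge0 y_ge0.
have [/card0_eq A0 | A_gt0] := posnP #|A|.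
  by rewrite (big_pred0 _ _ _ _ A0); apply: sumr_ge0.
have double_sums :
    (\sum_(i in A) x i) * #|B|%:R <= #|A|%:R * \sum_(j in B) y j.
  have -> : (\sum_(i in A) x i) * #|B|%:R = \sum_(i in A) \sum_(j in B) x i.
    by rewrite mulr_suml; apply: eq_bigr => i _; rewrite sumr_const mulr_natr.
  have -> : #|A|%:R * \sum_(j in B) y j = \sum_(i in A) \sum_(j in B) y j.
    by rewrite sumr_const mulr_natl.
  by apply: ler_sum => i iA; apply: ler_sum => j jB; exact: lexy.
have card_weight :
    (\sum_(i in A) x i) * #|A|%:R <= (\sum_(i in A) x i) * #|B|%:R.
  by apply: ler_wpM2l; [exact: sumr_ge0 | rewrite ler_nat].
rewrite -(ler_pM2r (_ : 0 < #|A|%:R)) ?ltr0n // [leRHS]mulrC.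
exact: le_trans card_weight double_sums.
Qed.

Lemma eq_of_sum_eq {I : finType} {a b : I -> nat} :
  (forall i, (a i <= b i)%N) ->
  (\sum_(i : I) a i = \sum_(i : I) b i)%N -> forall i, a i = b i.
Proof.
move=> le_ab /eqP; rewrite (leqif_sum (fun i _ => leqif_eq (le_ab i))).
by move=> /forallP eq_ab i; apply/eqP; exact: eq_ab.
Qed.

Section Partition.
Context {N L : nat} {S : 'I_L -> {set 'I_N}}.
Hypothesis S_disjoint : forall l1 l2, l1 != l2 -> [disjoint S l1 & S l2].
Hypothesis S_cover : \bigcup_(l < L) S l = [set: 'I_N].

Lemma block_unique {x : 'I_N} {l1 l2 : 'I_L} :
  x \in S l1 -> x \in S l2 -> l1 = l2.
Proof.
move=> x1 x2; apply/eqP; apply: contraT => /S_disjoint disj12.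
by rewrite (disjointFr disj12 x1) in x2.
Qed.

Lemma block_exists (x : 'I_N) : exists l, x \in S l.
Proof.
have : x \in \bigcup_(l < L) S l by rewrite S_cover inE.
by case/bigcupP=> l _ xl; exists l.
Qed.

Lemma sum_by_blocks {V : nmodType} (A : {set 'I_N}) (f : 'I_N -> V) :
  \sum_(i in A) f i = \sum_(l < L) \sum_(i in A :&: S l) f i.
Proof.
have -> : \sum_(l < L) \sum_(i in A :&: S l) f i =
    \sum_(l < L) \sum_(i in A) (if i \in S l then f i else 0).
  by apply: eq_bigr => l _; rewrite -big_mkcondr; apply: eq_bigl => i; rewrite inE.
rewrite exchange_big /=; apply: eq_bigr => i _.
have [l0 il0] := block_exists i.
rewrite (bigD1 l0) //= il0 big1 ?addr0 // => l ne_l.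
by case: ifP => // il; rewrite (block_unique il il0) eqxx in ne_l.
Qed.

Lemma card_by_blocks (A : {set 'I_N}) :
  #|A| = (\sum_(l < L) #|A :&: S l|)%N.
Proof.
rewrite -sum1_card (sum_by_blocks A (fun=> 1%N)).
by apply: eq_bigr => l _; rewrite sum1_card.
Qed.
End Partition.

Section MonotoneSubmodular.
Context {R : realDomainType} {N : nat} (F : {set 'I_N} -> R).
Hypothesis F_submod : forall A B, F (A :|: B) + F (A :&: B) <= F A + F B.
Hypothesis F_mono : forall A B : {set 'I_N}, A \subset B -> F A <= F B.

Definition gain (A : {set 'I_N}) (o : 'I_N) : R := F (A :|: [set o]) - F A.

Lemma gain_ge0 (A : {set 'I_N}) (o : 'I_N) : 0 <= gain A o.
Proof. by rewrite subr_ge0 F_mono ?subsetUl. Qed.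

Lemma gain_antitone {A B : {set 'I_N}} (o : 'I_N) :
  A \subset B -> gain B o <= gain A o.
Proof.
move=> sAB; have := F_submod (A :|: [set o]) B.
rewrite setUAC (setUidPr sAB).
have : F A <= F ((A :|: [set o]) :&: B) by rewrite F_mono // subsetI subsetUl.
rewrite /gain; lra.
Qed.

Lemma gain_union_le (A X : {set 'I_N}) :
  F (A :|: X) <= F A + \sum_(o in X) gain A o.
Proof.
rewrite -big_enum -{1}[X]set_enum; elim: (enum X) => [|x s IH].
  by rewrite big_nil addr0 set_nil setU0.
have -> : A :|: [set y in x :: s] = (A :|: [set y in s]) :|: [set x].
  by apply/setP => y; rewrite !inE; case: (y == x); rewrite ?orbT ?orbF.
rewrite big_cons /=; have := gain_antitone x (subsetUl A [set y in s]).
rewrite {1}/gain; lra.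
Qed.
End MonotoneSubmodular.

Section GreedyRun.
Context {R : realType} {N L : nat} {F : {set 'I_N} -> R}
  {S : 'I_L -> {set 'I_N}} {r : 'I_L -> nat}.
Hypothesis F_submod : forall A B, F (A :|: B) + F (A :&: B) <= F A + F B.
Hypothesis F_mono : forall A B : {set 'I_N}, A \subset B -> F A <= F B.
Hypothesis S_disjoint : forall l1 l2, l1 != l2 -> [disjoint S l1 & S l2].
Hypothesis S_cover : \bigcup_(l < L) S l = [set: 'I_N].

Context {s : seq 'I_N}.
Hypothesis s_size : size s = (\sum_(l < L) r l)%N.
Hypothesis s_greedy : forall (s1 s2 : seq 'I_N) (tk : 'I_N),
  s = s1 ++ tk :: s2 ->
  tk \in JGS_cand S r [set x in s1] /\
  (forall t, t \in JGS_cand S r [set x in s1] ->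
     F ([set x in s1] :|: [set t]) <= F ([set x in s1] :|: [set tk])).

Local Notation Rs := [set x in s].
Local Notation prefix k := [set x in take k s].
Local Notation step_gain k := (F (prefix k.+1) - F (prefix k)).

(* Every prefix of the run is duplicate-free and respects the block quotas:
   a candidate is always new and taken from a block whose quota is not full. *)
Lemma greedy_prefix_feasible (p q : seq 'I_N) : s = p ++ q ->
  uniq p /\ forall l, (#|[set x in p] :&: S l| <= r l)%N.
Proof.
elim/last_ind: p q => [|p t IH] q s_pq.
  by split=> // l; rewrite set_nil set0I cards0.
have s_ptq : s = p ++ t :: q by rewrite s_pq cat_rcons.
have [uniq_p quota_p] := IH _ s_ptq.
have [/bigcupP [l' quota_l'] ] := s_greedy _ _ _ s_ptq.
rewrite !inE => /andP [t_new t_l'] _.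
split; first by rewrite rcons_uniq t_new uniq_p.
move=> l; have [t_l | t_nl] := boolP (t \in S l); last first.
  rewrite (_ : _ :&: _ = [set x in p] :&: S l) ?quota_p //.
  apply/setP => x; rewrite !inE mem_rcons inE.
  by case: eqVneq => [->|]; rewrite ?(negbTE t_nl) ?andbF.
rewrite (_ : _ :&: _ = t |: ([set x in p] :&: S l)); last first.
  by apply/setP => x; rewrite !inE mem_rcons inE; case: eqVneq => [->|].
by rewrite cardsU1 !inE (negbTE t_new) -(block_unique S_disjoint t_l' t_l).
Qed.

(* The output meets every block in exactly its quota: each block count is
   at most r l and the total is sum_l r l. *)
Lemma greedy_block_count (l : 'I_L) : #|Rs :&: S l| = r l.
Proof.
have [uniq_s quota_s] := greedy_prefix_feasible _ _ (esym (cats0 s)).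
move: l; apply: (eq_of_sum_eq quota_s).
by rewrite -(card_by_blocks S_disjoint S_cover) -s_size cardsE; apply/card_uniqP.
Qed.

Lemma greedy_split_at {x : 'I_N} : x \in s ->
  s = take (index x s) s ++ x :: drop (index x s).+1 s.
Proof.
move=> xs; have := drop_nth x (_ : index x s < size s)%N.
by rewrite index_mem nth_index // => /(_ xs) <-; rewrite cat_take_drop.
Qed.

Lemma prefix_succ (x : 'I_N) : x \in s ->
  prefix (index x s).+1 = prefix (index x s) :|: [set x].
Proof.
move=> xs; rewrite (take_nth x) ?index_mem // nth_index //.
by apply/setP => y; rewrite !inE mem_rcons inE orbC.
Qed.

Lemma step_gain_ge0 (x : 'I_N) : x \in s -> 0 <= step_gain (index x s).
Proof. by move=> xs; rewrite prefix_succ // subr_ge0 F_mono ?subsetUl. Qed.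

(* If o was not
   chosen before x, it was a candidate at that step (x's block was not full),
   and gains only shrink as the selection grows. *)
Lemma greedy_step_dominates {x o : 'I_N} {l : 'I_L} :
  x \in s -> x \in S l -> o \in S l -> gain F Rs o <= step_gain (index x s).
Proof.
move=> xs xl ol; set k := index x s.
have [x_cand x_best] := s_greedy _ _ _ (greedy_split_at xs).
have prefix_sub : prefix k \subset Rs.
  by apply/subsetP => y; rewrite !inE; exact: mem_take.
apply: le_trans (gain_antitone F F_submod F_mono o prefix_sub) _.
rewrite /gain prefix_succ //.
have [o_old | o_new] := boolP (o \in prefix k).
  by rewrite (setUidPl _) ?sub1set // subrr subr_ge0 F_mono ?subsetUl.
suff o_cand : o \in JGS_cand S r (prefix k) by have := x_best o o_cand; lra.
case/bigcupP: x_cand => l' quota_l'; rewrite inE => /andP [_ xl'].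
apply/bigcupP; exists l; first by rewrite -(block_unique S_disjoint xl' xl).
by rewrite inE o_new.
Qed.

Lemma greedy_gains_telescope :
  \sum_(x in Rs) step_gain (index x s) = F Rs - F set0.
Proof.
case: (pickP (mem s)) => [x0 _ | s_empty]; last first.
  have -> : Rs = set0 by apply/setP => x; rewrite !inE; exact: s_empty.
  by rewrite big_set0 subrr.
have [uniq_s _] := greedy_prefix_feasible _ _ (esym (cats0 s)).
rewrite (eq_bigl (mem s)) => [|x]; last by rewrite inE.
rewrite -big_uniq // (big_nth x0) (eq_big_nat _ _ (F2 := fun k => step_gain k)).
  by rewrite telescope_sumr // take_size take0 set_nil.
by move=> k /andP [_ k_lt]; rewrite index_uniq.
Qed.

(* Half-approximation of the run: block-wise, the gains of the elements of O
   are dominated by the step gains of the equally many chosen elements. *)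
Lemma greedy_run_half (O : {set 'I_N}) :
  (forall l, (#|O :&: S l| <= r l)%N) -> F O <= 2 * F Rs - F set0.
Proof.
move=> quota_O.
have O_gains : \sum_(o in O) gain F Rs o <= \sum_(x in Rs) step_gain (index x s).
  rewrite (sum_by_blocks S_disjoint S_cover O) (sum_by_blocks S_disjoint S_cover Rs).
  apply: ler_sum => l _; apply: sum_le_of_card_le.
  - by rewrite greedy_block_count.
  - move=> o x /setIP [_ ol] /setIP [xs xl].
    by apply: (greedy_step_dominates _ xl ol); rewrite inE in xs.
  - by move=> o _; exact: gain_ge0.
  - by move=> x /setIP [xs _]; apply: step_gain_ge0; rewrite inE in xs.
have := gain_union_le F F_submod F_mono Rs O.
have : F O <= F (Rs :|: O) by rewrite F_mono ?subsetUr.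
rewrite greedy_gains_telescope in O_gains; lra.
Qed.
End GreedyRun.

Lemma JGS_output_half {R : realType} {N L : nat} {F : {set 'I_N} -> R}
    {S : 'I_L -> {set 'I_N}} {r : 'I_L -> nat} {Rout O : {set 'I_N}} :
  (forall A B, F (A :|: B) + F (A :&: B) <= F A + F B) ->
  (forall A B : {set 'I_N}, A \subset B -> F A <= F B) ->
  (forall l1 l2, l1 != l2 -> [disjoint S l1 & S l2]) ->
  \bigcup_(l < L) S l = [set: 'I_N] ->
  JGS_output F S r Rout ->
  (forall l, (#|O :&: S l| <= r l)%N) -> F O <= 2 * F Rout - F set0.
Proof.
move=> F_submod F_mono S_disjoint S_cover [s [s_size s_greedy ->]].
exact: (greedy_run_half F_submod F_mono S_disjoint S_cover s_size s_greedy).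
Qed.

Section PairSum.
Context {R : realDomainType} {N : nat} (a : 'I_N -> 'I_N -> R).
Hypothesis a_ge0 : forall i j, 0 <= a i j.

Definition pair_sum (X : {set 'I_N}) : R := \sum_(i in X) \sum_(j in X) a i j.

Lemma pair_sumE (X : {set 'I_N}) :
  pair_sum X = \sum_i \sum_j (if (i \in X) && (j \in X) then a i j else 0).
Proof.
rewrite /pair_sum big_mkcond; apply: eq_bigr => i _.
by case: (i \in X); [rewrite big_mkcond | rewrite big1].
Qed.

(* Supermodularity: a pair inside X or inside Y lies in X :|: Y, and a pair
   inside both lies in X :&: Y; nonnegative weights do the rest. *)
Lemma pair_sum_supermod (X Y : {set 'I_N}) :
  pair_sum X + pair_sum Y <= pair_sum (X :|: Y) + pair_sum (X :&: Y).
Proof.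
rewrite !pair_sumE -!big_split; apply: ler_sum => i _.
rewrite -!big_split; apply: ler_sum => j _ /=; rewrite !inE.
by have := a_ge0 i j; case: (i \in X); case: (i \in Y);
  case: (j \in X); case: (j \in Y) => /=; lra.
Qed.

(* Enlarging X only adds pairs of nonnegative weight. *)
Lemma pair_sum_mono (X Y : {set 'I_N}) : X \subset Y -> pair_sum X <= pair_sum Y.
Proof.
move=> /subsetP sXY; rewrite !pair_sumE; apply: ler_sum => i _.
apply: ler_sum => j _; have := a_ge0 i j.
case: (boolP (i \in X)) => [/sXY -> | _]; case: (boolP (j \in X)) => [/sXY -> | _];
  by rewrite /= ?andbF //; case: ifP.
Qed.
End PairSum.

Section FrameCost.
Context {R : realType} {K N : nat} (g : 'I_N -> 'cV[R[i]]_K) (w : 'I_N -> R).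
Hypothesis w_ge0 : forall i, 0 <= w i.

Definition frame_weight (i j : 'I_N) : R :=
  w i * w j * csqabs (cinner (g i) (g j)) / (csqnorm (g i) * csqnorm (g j)).

Lemma frame_weight_ge0 (i j : 'I_N) : 0 <= frame_weight i j.
Proof.
have csqabs_ge0 (z : R[i]) : 0 <= csqabs z by rewrite addr_ge0 ?sqr_ge0.
have csqnorm_ge0 (u : 'cV[R[i]]_K) : 0 <= csqnorm u by apply: sumr_ge0.
by rewrite divr_ge0 ?mulr_ge0.
Qed.

Lemma WFP_pair_sum (X : {set 'I_N}) : WFP g w X = pair_sum frame_weight X.
Proof. by []. Qed.

(* Removing sensors costs a monotone submodular amount, as the complement
   of a monotone supermodular pair sum. *)
Lemma WFC_submod (A B : {set 'I_N}) :
  WFC g w (A :|: B) + WFC g w (A :&: B) <= WFC g w A + WFC g w B.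
Proof.
rewrite /WFC !WFP_pair_sum setCU setCI.
have := pair_sum_supermod _ frame_weight_ge0 (~: A) (~: B); lra.
Qed.

Lemma WFC_mono (A B : {set 'I_N}) : A \subset B -> WFC g w A <= WFC g w B.
Proof.
rewrite -setCS /WFC !WFP_pair_sum => /(pair_sum_mono _ frame_weight_ge0); lra.
Qed.
End FrameCost.

Theorem theorem3 (R : realType) (K N L : nat)
  (g : 'I_N -> 'cV[R[i]]_K) (w : 'I_N -> R)
  (S : 'I_L -> {set 'I_N}) (r : 'I_L -> nat)
  (Rstar Topt : {set 'I_N}) :
  (forall i, g i != 0) ->
  (forall i, 0 <= w i) ->
  (forall l1 l2, l1 != l2 -> [disjoint S l1 & S l2]) ->
  (\bigcup_(l < L) S l = [set: 'I_N]) ->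
  (forall l, (r l <= #|S l|)%N) ->
  (exists l, r l != 0%N) ->
  JGS_output (WFC g w) S r Rstar ->
  (forall l, #|Topt :&: S l| = (#|S l| - r l)%N) ->
  (forall T : {set 'I_N}, (forall l, #|T :&: S l| = (#|S l| - r l)%N) ->
     WFP g w Topt <= WFP g w T) ->
  0 < WFP g w Topt ->
  WFP g w (~: Rstar) <=
    2^-1 * (1 + WFP g w [set: 'I_N] / WFP g w Topt) * WFP g w Topt.
Proof.
move=> _ w_ge0 S_disjoint S_cover _ _ greedy Topt_card _ Topt_pos.
have removed_quota l : (#|~: Topt :&: S l| <= r l)%N.
  rewrite setIC -setDE; have := cardsID Topt (S l).
  by rewrite setIC Topt_card; lia.
have := JGS_output_half (WFC_submod g w w_ge0) (WFC_mono g w w_ge0)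
  S_disjoint S_cover greedy removed_quota.
rewrite /WFC setCK setC0 subrr.
have -> : 2^-1 * (1 + WFP g w [set: 'I_N] / WFP g w Topt) * WFP g w Topt
    = (WFP g w Topt + WFP g w [set: 'I_N]) / 2 by field; rewrite gt_eqF.
lra.
Qed.
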